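(* Let $\Gamma$ be a finite simple graph. Then $\Gamma$ admits no $k$-extended irregular dominating set for $k=2$ and for $k=3$.
   Context: Let $\Gamma=(V,E)$ be a finite simple undirected graph with graph distance $d$. A vertex $v$ carrying a non-negative integer label $\ell$ is said to dominate (or cover) exactly the vertices $u$ with $d(u,v)=\ell$; in particular a vertex labeled $0$ dominates only itself. For $k\ge 0$, a $k$-extended irregular dominating set is a set $S\subseteq V$ of $k$ vertices together with a labeling $\lambda:S\to\mathbb{Z}_{\ge 0}$ assigning distinct labels to distinct vertices, such that every vertex of $V$ is dominated by at least one vertex of $S$; throughout, it is assumed that some vertex of $S$ has label $0$. The labeling $\lambda$ is called a $k$-extended irregular dominating labeling. *)

From mathcomp Require Import all_boot.
Set Implicit Arguments. Unset Strict Implicit. Unset Printing Implicit Defensive.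

Definition walk (T : finType) (e : rel T) (u v : T) (n : nat) : Prop :=
  exists p : seq T, [/\ size p = n, path e u p & last u p = v].

(* graph distance d(u,v) equals n (never holds if u, v are in different
   components, i.e. d = infinity) *)
Definition dist_eq (T : finType) (e : rel T) (u v : T) (n : nat) : Prop :=
  walk e u v n /\ forall m, m < n -> ~ walk e u v m.

Definition dominates (T : finType) (e : rel T) (v : T) (l : nat) (u : T) : Prop :=
  dist_eq e v u l.

Definition ext_irr_dom (T : finType) (e : rel T) (k : nat)
    (S : {set T}) (lam : T -> nat) : Prop :=
  [/\ #|S| = k,
      {in S &, injective lam},
      (exists2 x, x \in S & lam x = 0)
    & forall u : T, exists2 v, v \in S & dominates e v (lam v) u].

From mathcomp Require Import all_boot.

Set Implicit Arguments.
Unset Strict Implicit.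
Unset Printing Implicit Defensive.

(* The vertex labelled 0 dominates only itself, and a vertex with a nonzero
   label cannot dominate itself.  Hence every vertex of S with a nonzero label
   is dominated by a different vertex of S with a nonzero label.  For k = 2
   there is only one such vertex; for k = 3 the two such vertices y, z must
   dominate each other, so lam y = d(y, z) = lam z, against injectivity. *)

Section GraphDistance.

Variables (T : finType) (e : rel T).

Lemma walk_sym : symmetric e -> forall u v n, walk e u v n -> walk e v u n.
Proof.
move=> e_sym u v n [p [size_p e_path last_p]].
exists (rev (belast u p)); split.
- by rewrite size_rev size_belast.
- by rewrite -last_p rev_path (@eq_path _ _ e) // => a b /=; rewrite e_sym.
- rewrite -last_p; case/lastP: p {size_p e_path last_p} => [|q w] //=.
  by rewrite belast_rcons rev_cons last_rcons.
Qed.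

Lemma dist_eq_sym : symmetric e -> forall u v n, dist_eq e u v n -> dist_eq e v u n.
Proof.
move=> e_sym u v n [uv_walk uv_min]; split; first exact: walk_sym.
by move=> m lt_mn /(walk_sym e_sym) /(uv_min _ lt_mn).
Qed.

Lemma dist_eq_uniq u v n m : dist_eq e u v n -> dist_eq e u v m -> n = m.
Proof.
move=> [n_walk n_min] [m_walk m_min].
by case: (ltngtP n m) => // [/m_min | /n_min].
Qed.

Lemma dist_eq0 u v : dist_eq e u v 0 -> u = v.
Proof. by move=> [[p [size_p _ <-]] _]; case: p size_p. Qed.

Lemma dist_eq_refl u n : dist_eq e u u n -> n = 0.
Proof. by case: n => // n [_ /(_ 0 erefl)]; case; exists [::]. Qed.

End GraphDistance.

Section IrregularDomination.

Variables (T : finType) (e : rel T) (k : nat) (S : {set T}) (lam : T -> nat).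
Hypothesis dom : ext_irr_dom e k S lam.

Definition nonzero_labelled := [set v in S | lam v != 0].

Lemma card_nonzero_labelled : #|nonzero_labelled| = k.-1.
Proof.
case: dom => card_S lam_inj [x xS lam_x] _.
have -> : nonzero_labelled = S :\ x.
  apply/setP => v; rewrite !inE andbC; case vS: (v \in S); rewrite ?andbT ?andbF //.
  congr (~~ _); apply/eqP/eqP => [lam_v | ->//].
  by apply: lam_inj; rewrite ?lam_v.
by rewrite -card_S (cardsD1 x S) xS.
Qed.

Lemma card_nonzero_labelledD1 y :
  y \in nonzero_labelled -> #|nonzero_labelled :\ y| = k.-2.
Proof. by move=> y_nz; have := card_nonzero_labelled; rewrite (cardsD1 y) y_nz => <-. Qed.

Lemma nonzero_labelled_dominated y : y \in nonzero_labelled ->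
  exists2 v, v \in nonzero_labelled :\ y & dist_eq e v y (lam v).
Proof.
rewrite !inE => /andP [yS lam_y]; case: dom => _ _ _ /(_ y) [v vS v_dom_y].
exists v => //; rewrite !inE vS /=.
apply/andP; split; apply: contraNneq lam_y.
- by move=> vy; move: v_dom_y; rewrite vy => /dist_eq_refl ->.
- by move=> lam_v; move: v_dom_y; rewrite lam_v => /dist_eq0 <-; rewrite lam_v.
Qed.

Lemma no_mutual_domination y z : symmetric e ->
  y \in S -> z \in S -> y != z ->
  dist_eq e z y (lam z) -> dist_eq e y z (lam y) -> False.
Proof.
move=> e_sym yS zS /eqP yz z_dom_y y_dom_z; apply: yz.
case: dom => _ lam_inj _ _; apply: lam_inj => //.
exact: dist_eq_uniq (dist_eq_sym e_sym y_dom_z) z_dom_y.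
Qed.

End IrregularDomination.

Theorem proposition2p2 (T : finType) (e : rel T) :
  symmetric e -> irreflexive e ->
  forall k : nat, k = 2 \/ k = 3 ->
  ~ (exists (S : {set T}) (lam : T -> nat), ext_irr_dom e k S lam).
Proof.
move=> e_sym _ k k23 [S [lam dom]].
have [y y_nz] : exists y, y \in nonzero_labelled S lam.
  by apply/card_gt0P; rewrite (card_nonzero_labelled dom); case: k23 => ->.
have [z z_Dy z_dom_y] := nonzero_labelled_dominated dom y_nz.
have [k2 | k3] := k23.
  have := card_nonzero_labelledD1 dom y_nz; rewrite k2 => /cards0_eq no_z.
  by rewrite no_z inE in z_Dy.
have /setD1P [zy z_nz] := z_Dy.
have [w w_Dz w_dom_z] := nonzero_labelled_dominated dom z_nz.
have y_Dz : y \in nonzero_labelled S lam :\ z by rewrite in_setD1 eq_sym zy.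
have : #|nonzero_labelled S lam :\ z| <= 1 by rewrite (card_nonzero_labelledD1 dom) ?k3.
move/card_le1_eqP/(_ w y w_Dz y_Dz) => w_y; subst w.
move: y_nz z_nz; rewrite !inE => /andP [yS _] /andP [zS _].
by apply: (no_mutual_domination dom e_sym yS zS _ z_dom_y w_dom_z); rewrite eq_sym.
Qed.
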